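(* Let $V$ be a Majorana representation with identity $\mathbb 1$ satisfying axiom M2'. Then the Majorana axes of $V$ (the elements of $\psi(T)$) are indecomposable idempotents.
   Context: A transposition group $(G,T)$ is a finite group $G$ with a $G$-stable set $T$ of involutions generating $G$. A Majorana representation of $(G,T)$ is a quintuple $(G,T,V,\varphi,\psi)$ where $V$ is a commutative non-associative real algebra with a (positive definite) inner product $(\,,)$, $\varphi:G\to GL(V)$ is a representation with $\varphi(G)\le \mathrm{Aut}(V)$, and $\psi:T\to V\setminus\{0\}$ is injective with $\psi(t^g)=\psi(t)^{\varphi(g)}$, such that: (M1) $(u,v\cdot w)=(u\cdot v,w)$ for all $u,v,w$; (M2) $(u\cdot u,v\cdot v)\ge (u\cdot v,u\cdot v)$ for all $u,v$; (M3) elements of $\psi(T)$ (Majorana axes) are idempotents of length $1$; (M4) each Majorana axis $a$ has $\mathrm{ad}_a:u\mapsto a\cdot u$ diagonalizable with eigenvalues in $\{0,1,\frac1{4},\frac1{32}\}$; (M5) $1$ is a simple eigenvalue of each Majorana axis; (M6) for each axis $a$ the linear map $\tau(a)$ acting as $(-1)^{32\mu}$ on the $\mu$-eigenspace of $\mathrm{ad}_a$ is an algebra automorphism; (M7) for each axis $a$ the map $\sigma(a)$ on $C_V(\tau(a))$ acting as $(-1)^{4\mu}$ on the $\mu$-eigenspaces, $\mu\ne\frac1{32}$, preserves the product of $C_V(\tau(a))$; (M8) $\tau(\psi(t))=\varphi(t)$ for all $t\in T$. Axiom M2': the Norton inequality holds for all $u,v$, with equality precisely when $\mathrm{ad}_u$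 and $\mathrm{ad}_v$ commute. An idempotent is decomposable if it can be written as a sum of at least two non-zero idempotents, and indecomposable otherwise. *)

From HB Require Import structures.
From mathcomp Require Import all_boot all_order all_algebra all_fingroup.
From mathcomp Require Import reals.
Set Implicit Arguments. Unset Strict Implicit. Unset Printing Implicit Defensive.
Import Order.TTheory GRing.Theory Num.Theory.
Local Open Scope ring_scope.

Section MajoranaDefs.
Variables (R : realType) (V : lmodType R).

Definition is_comm_bilinear (mul : V -> V -> V) : Prop :=
  (forall u v, mul u v = mul v u) /\
  (forall (k : R) u v w, mul (k *: u + v) w = k *: mul u w + mul v w).

Definition is_inner_product (form : V -> V -> R) : Prop :=
  (forall u v, form u v = form v u) /\
  (forall (k : R) u v w, form (k *: u + v) w = k * form u w + form v w) /\
  (forall v, v != 0 -> 0 < form v v).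

Definition is_linear_map (f : V -> V) : Prop :=
  forall (k : R) u v, f (k *: u + v) = k *: f u + f v.

Definition is_alg_aut (mul : V -> V -> V) (f : V -> V) : Prop :=
  [/\ is_linear_map f, bijective f & forall u v, f (mul u v) = mul (f u) (f v)].

Definition eigv (mul : V -> V -> V) (a : V) (mu : R) (v : V) : Prop :=
  mul a v = mu *: v.

Definition idempotent (mul : V -> V -> V) (a : V) : Prop := mul a a = a.

(* tau(a): acts as (-1)^(32 mu) on the mu-eigenspace of ad_a *)
Definition is_tau (mul : V -> V -> V) (a : V) (f : V -> V) : Prop :=
  [/\ is_linear_map f,
      (forall v, eigv mul a 0 v \/ eigv mul a 1 v \/ eigv mul a (1/4) v -> f v = v)
    & (forall v, eigv mul a (1/32) v -> f v = - v)].

(* sigma(a) on C_V(tau(a)): acts as (-1)^(4 mu) on the mu-eigenspaces, mu <> 1/32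
   (its values outside C_V(tau(a)) are irrelevant) *)
Definition is_sigma (mul : V -> V -> V) (a : V) (s : V -> V) : Prop :=
  [/\ is_linear_map s,
      (forall v, eigv mul a 0 v \/ eigv mul a 1 v -> s v = v)
    & (forall v, eigv mul a (1/4) v -> s v = - v)].

Record majorana_axis (mul : V -> V -> V) (form : V -> V -> R) (a : V) : Prop := {
  M3_idem : idempotent mul a;
  M3_length : form a a = 1;
  M4 : forall v, exists v0 v1 v2 v3,
         [/\ v = v0 + v1 + v2 + v3, eigv mul a 0 v0, eigv mul a 1 v1,
             eigv mul a (1/4) v2 & eigv mul a (1/32) v3];
  M5 : forall v, eigv mul a 1 v -> exists k : R, v = k *: a;
  M6 : forall f, is_tau mul a f -> is_alg_aut mul f;
  M7 : forall f s, is_tau mul a f -> is_sigma mul a s ->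
         forall u v, f u = u -> f v = v -> s (mul u v) = mul (s u) (s v)
}.

(* Majorana representation (G, T, V, phi, psi); phi is a right action:
   v^(phi (g h)) = (v^(phi g))^(phi h), matching t^g = g^-1 t g in MathComp. *)
Record majorana_rep (mul : V -> V -> V) (form : V -> V -> R)
    (gT : finGroupType) (G : {group gT}) (T : {set gT})
    (phi : gT -> V -> V) (psi : gT -> V) : Prop := {
  tg_invol : forall t, t \in T -> #[t]%g = 2%N;
  tg_stable : forall t g, t \in T -> g \in G -> (t ^ g)%g \in T;
  tg_gen : <<T>>%g = G :> {set gT};
  alg_prod : is_comm_bilinear mul;
  inner : is_inner_product form;
  M1 : forall u v w, form u (mul v w) = form (mul u v) w;
  M2 : forall u v, form (mul u v) (mul u v) <= form (mul u u) (mul v v);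
  rep_one : forall v, phi 1%g v = v;
  rep_mul : forall g h, g \in G -> h \in G -> forall v, phi (g * h)%g v = phi h (phi g v);
  rep_aut : forall g, g \in G -> is_alg_aut mul (phi g);
  psi_inj : {in T &, injective psi};
  psi_nz : forall t, t \in T -> psi t != 0;
  psi_equiv : forall t g, t \in T -> g \in G -> psi (t ^ g)%g = phi g (psi t);
  axes : forall t, t \in T -> majorana_axis mul form (psi t);
  M8 : forall t, t \in T -> is_tau mul (psi t) (phi t)
}.

Definition axiom_M2' (mul : V -> V -> V) (form : V -> V -> R) : Prop :=
  forall u v,
    form (mul u v) (mul u v) <= form (mul u u) (mul v v) /\
    (form (mul u u) (mul v v) = form (mul u v) (mul u v) <->
       forall w, mul u (mul v w) = mul v (mul u w)).

Definition decomposable (mul : V -> V -> V) (a : V) : Prop :=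
  exists s : seq V,
    [/\ (2 <= size s)%N,
        (forall x, x \in s -> x != 0 /\ idempotent mul x)
      & a = \sum_(x <- s) x].

Definition indecomposable_idempotent (mul : V -> V -> V) (a : V) : Prop :=
  idempotent mul a /\ ~ decomposable mul a.

End MajoranaDefs.

(* A Majorana axis a is idempotent with (a, a) = 1, and the identity makes the
   inner product (1, x) equal to (x, x) for every idempotent x.  If a = x_1 + ... + x_n
   with idempotents x_i, comparing (a, a) = sum_(i,j) (x_i, x_j) with
   (1, a) = sum_i (x_i, x_i) shows that the off-diagonal products (x_i, x_j) sum to
   zero; the Norton inequality makes each of them nonnegative, hence zero, and then
   forces x_i x_j = 0 for i <> j.  So a x_i = x_i for every i, and since 1 is a simple
   eigenvalue of ad_a, every nonzero x_i equals a.  Two summands x_1 = x_2 = a would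
   then give a = a a = x_1 x_2 = 0. *)

From Pilot Require
Import Defs.
From HB Require Import structures.
From mathcomp Require Import all_boot all_order all_algebra all_fingroup.
From mathcomp Require Import reals.
Import Order.TTheory GRing.Theory Num.Theory.
(* Re-import so that [idempotent] refers to Defs rather than to ssrfun. *)
Import Defs.
Local Open Scope ring_scope.

Set Implicit Arguments. Unset Strict Implicit.

Section Bilinear.
Variables (R : realType) (V : lmodType R) (mul : V -> V -> V).
Hypothesis Hmul : is_comm_bilinear mul.

Lemma mulDl u v w : mul (u + v) w = mul u w + mul v w.
Proof. by case: Hmul => _ H; have := H 1 u v w; rewrite !scale1r. Qed.

Lemma mul0l w : mul 0 w = 0.
Proof. by apply: (@addrI _ (mul 0 w)); rewrite -mulDl !addr0. Qed.

Lemma mulZl k u w : mul (k *: u) w = k *: mul u w.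
Proof. by case: Hmul => _ H; have := H k u 0 w; rewrite !addr0 mul0l addr0. Qed.

Lemma mul_suml (I : Type) (r : seq I) (P : pred I) (F : I -> V) w :
  mul (\sum_(i <- r | P i) F i) w = \sum_(i <- r | P i) mul (F i) w.
Proof. exact: (big_morph (mul^~ w) (fun u v => mulDl u v w) (mul0l w)). Qed.

End Bilinear.

Section InnerProduct.
Variables (R : realType) (V : lmodType R) (form : V -> V -> R).
Hypothesis Hform : is_inner_product form.

Lemma formDl u v w : form (u + v) w = form u w + form v w.
Proof. by case: Hform => _ [H _]; have := H 1 u v w; rewrite scale1r mul1r. Qed.

Lemma form0l w : form 0 w = 0.
Proof. by apply: (@addrI _ (form 0 w)); rewrite -formDl !addr0. Qed.

Lemma form_suml (I : Type) (r : seq I) (P : pred I) (F : I -> V) w :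
  form (\sum_(i <- r | P i) F i) w = \sum_(i <- r | P i) form (F i) w.
Proof. exact: (big_morph (form^~ w) (fun u v => formDl u v w) (form0l w)). Qed.

Lemma form_sumr (I : Type) (r : seq I) (P : pred I) (F : I -> V) w :
  form w (\sum_(i <- r | P i) F i) = \sum_(i <- r | P i) form w (F i).
Proof.
case: Hform => Hsym _; rewrite Hsym form_suml.
by apply: eq_bigr => i _; apply: Hsym.
Qed.

Lemma form_ge0 v : 0 <= form v v.
Proof.
case: Hform => _ [_ Hpos].
by have [->|/Hpos/ltW //] := eqVneq v 0; rewrite form0l.
Qed.

Lemma form_le0_eq0 v : form v v <= 0 -> v = 0.
Proof.
case: Hform => _ [_ Hpos] Hle.
by case: (eqVneq v 0) => // /Hpos; rewrite ltNge Hle.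
Qed.

End InnerProduct.

Section NortonIdempotents.
Variables (R : realType) (V : lmodType R) (mul : V -> V -> V) (form : V -> V -> R).
Variable one : V.
Hypothesis Hmul : is_comm_bilinear mul.
Hypothesis Hform : is_inner_product form.
Hypothesis form_assoc : forall u v w, form u (mul v w) = form (mul u v) w.
Hypothesis norton : forall u v, form (mul u v) (mul u v) <= form (mul u u) (mul v v).
Hypothesis mul1v : forall v, mul one v = v.

Lemma form_one_idem x : idempotent mul x -> form one x = form x x.
Proof. by move=> Hx; rewrite -{1}Hx form_assoc mul1v. Qed.

Lemma norton_idem x y : idempotent mul x -> idempotent mul y ->
  form (mul x y) (mul x y) <= form x y.
Proof. by move=> Hx Hy; have := norton x y; rewrite Hx Hy. Qed.

Lemma form_idem_ge0 x y : idempotent mul x -> idempotent mul y -> 0 <= form x y.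
Proof. by move=> Hx Hy; apply: le_trans (form_ge0 Hform _) (norton_idem Hx Hy). Qed.

Lemma form_idem_eq0_mul x y : idempotent mul x -> idempotent mul y ->
  form x y = 0 -> mul x y = 0.
Proof.
by move=> Hx Hy Hxy; apply: (form_le0_eq0 Hform); rewrite -Hxy norton_idem.
Qed.

Lemma idempotent_sum_orthogonal (I : finType) (F : I -> V) :
  (forall i, idempotent mul (F i)) -> idempotent mul (\sum_i F i) ->
  forall i j, i != j -> mul (F i) (F j) = 0.
Proof.
move=> HF Ha; pose g i j := form (F i) (F j).
have g_ge0 i j : 0 <= g i j by apply: form_idem_ge0.
have diag_split : \sum_i g i i + \sum_i \sum_(j | j != i) g i j
                  = \sum_i g i i + 0.
  rewrite addr0 -big_split /=.
  have -> : \sum_i (g i i + \sum_(j | j != i) g i j) = form (\sum_i F i) (\sum_i F i).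
    rewrite (form_suml Hform); apply: eq_bigr => i _.
    by rewrite (form_sumr Hform) [RHS](bigD1 i).
  rewrite -form_one_idem // (form_sumr Hform).
  by apply: eq_bigr => i _; rewrite form_one_idem.
have off_diag0 : \sum_i \sum_(j | j != i) g i j = 0 by apply: addrI diag_split.
move=> i j Hij; apply: form_idem_eq0_mul => //.
have row0 : \sum_(j | j != i) g i j = 0.
  by apply: (psumr_eq0P _ off_diag0) => // k _; apply: sumr_ge0.
by apply: (psumr_eq0P _ row0); rewrite // eq_sym.
Qed.

Lemma idempotent_sum_absorbs (I : finType) (F : I -> V) :
  (forall i, idempotent mul (F i)) -> idempotent mul (\sum_i F i) ->
  forall i, mul (\sum_j F j) (F i) = F i.
Proof.
move=> HF Ha i; rewrite (mul_suml Hmul) (bigD1 i) //= HF big1 ?addr0 //.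
by move=> j Hji; apply: idempotent_sum_orthogonal.
Qed.

End NortonIdempotents.

Section MajoranaAxis.
Variables (R : realType) (V : lmodType R) (mul : V -> V -> V) (form : V -> V -> R).
Hypothesis Hmul : is_comm_bilinear mul.
Hypothesis Hform : is_inner_product form.
Variable a : V.
Hypothesis Ha : majorana_axis mul form a.

Lemma majorana_axis_neq0 : a != 0.
Proof.
apply/eqP => a0; have := M3_length Ha.
by rewrite a0 form0l // => /eqP; rewrite eq_sym oner_eq0.
Qed.

Lemma majorana_axis_fixed_idem x : idempotent mul x -> x != 0 -> mul a x = x -> x = a.
Proof.
move=> Hx x_neq0 Hax.
have [k Hk] : exists k, x = k *: a by apply: (M5 Ha); rewrite /eigv scale1r.
have kk : k * k = k.
  have : (k * k) *: a = k *: a.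
    case: Hmul => Hcomm _.
    by rewrite -Hk -[RHS]Hx Hk (mulZl Hmul) Hcomm (mulZl Hmul) (M3_idem Ha) scalerA.
  move/eqP; rewrite -subr_eq0 -scalerBl scaler_eq0 (negPf majorana_axis_neq0).
  by rewrite orbF subr_eq0 => /eqP.
have k_neq0 : k != 0 by apply: contraNneq x_neq0 => k0; rewrite Hk k0 scale0r.
have k1 : k = 1 by apply: (mulfI k_neq0); rewrite kk mulr1.
by rewrite Hk k1 scale1r.
Qed.

End MajoranaAxis.

(* Only the Norton inequality M2 is needed; its equality case M2' plays no role. *)
Theorem mainTheorem6 (R : realType) (V : lmodType R)
    (mul : V -> V -> V) (form : V -> V -> R)
    (gT : finGroupType) (G : {group gT}) (T : {set gT})
    (phi : gT -> V -> V) (psi : gT -> V)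
    (HV : majorana_rep mul form G T phi psi)
    (one : V) (Hone : forall v, mul one v = v)
    (HM2' : axiom_M2' mul form) :
  forall t, t \in T -> indecomposable_idempotent mul (psi t).
Proof.
move=> t tT; have Hax := axes HV tT; have Hmul := alg_prod HV.
split=> [|[s [size_s Hs a_sum]]]; first exact: M3_idem Hax.
pose F (i : 'I_(size s)) := nth 0 s i.
have [F_neq0 F_idem] : (forall i, F i != 0) /\ (forall i, idempotent mul (F i)).
  by split=> i; have [] := Hs _ (mem_nth 0 (ltn_ord i)).
have a_sumF : psi t = \sum_i F i by rewrite a_sum (big_nth 0) big_mkord.
have a_idem : idempotent mul (\sum_i F i) by rewrite -a_sumF; apply: M3_idem Hax.
have F_eq_a i : F i = psi t.
  apply: (majorana_axis_fixed_idem Hmul (inner HV) Hax) => //.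
  by rewrite a_sumF (idempotent_sum_absorbs Hmul (inner HV) (M1 HV) (M2 HV) Hone).
pose i0 : 'I_(size s) := Ordinal (ltnW size_s).
pose i1 : 'I_(size s) := Ordinal size_s.
have F01 : mul (F i0) (F i1) = 0.
  exact: (idempotent_sum_orthogonal (inner HV) (M1 HV) (M2 HV) Hone F_idem a_idem).
move: F01; rewrite !F_eq_a (M3_idem Hax) => /eqP.
exact/negP/(majorana_axis_neq0 (inner HV) Hax).
Qed.
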